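(* Let $d\ge 2$, let $\mu$ be a partition of $p$ with at most $d$ rows, let $\alpha_1,\ldots,\alpha_k$ be all the distinct partitions of $p-1$ obtained from $\mu$ by removing a single box, and let $B^{\mu\mu}$ be the $k\times k$ matrix with entries $b_{ij}=\frac{m_\mu}{d(d^2-1)}\Big(d\frac{m_\mu}{m_{\alpha_i}}\delta_{ij}-1\Big)$. Then $\det B^{\mu\mu}=0$ if and only if $d\,m_\mu=m_{\alpha_1}+m_{\alpha_2}+\cdots+m_{\alpha_k}$.
   Context: For a partition (Young diagram) $\lambda$ with at most $d$ rows, $m_\lambda$ denotes the number of semistandard Young tableaux of shape $\lambda$ with entries in $\{1,\ldots,d\}$ (equivalently, the multiplicity of the corresponding symmetric-group irrep in $(\mathbb{C}^d)^{\otimes|\lambda|}$). *)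

From mathcomp Require Import all_boot all_order all_algebra.
Set Implicit Arguments. Unset Strict Implicit. Unset Printing Implicit Defensive.

Definition is_partition (lam : seq nat) : bool :=
  sorted geq lam && all (fun x => 0 < x) lam.

(* cell (i,j), 0-indexed: row i, column j *)
Definition is_cell (lam : seq nat) (i j : nat) : bool :=
  (i < size lam) && (j < nth 0 lam i).

(* A filling of the bounding box size lam x head 0 lam with values in {0..d};
   0 is used as "empty" outside the diagram. *)
Definition filling (lam : seq nat) (d : nat) :=
  {ffun 'I_(size lam) * 'I_(head 0 lam) -> 'I_d.+1}.

Definition fval (lam : seq nat) (d : nat) (f : filling lam d) (i j : nat) : nat :=
  match @insub _ (fun k => k < size lam) 'I_(size lam) i,
        @insub _ (fun k => k < head 0 lam) 'I_(head 0 lam) j with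
  | Some i', Some j' => nat_of_ord (f (i', j'))
  | _, _ => 0
  end.

Definition is_ssyt (lam : seq nat) (d : nat) (f : filling lam d) : bool :=
  [forall ij : 'I_(size lam) * 'I_(head 0 lam),
     let i := nat_of_ord ij.1 in let j := nat_of_ord ij.2 in
     if is_cell lam i j then
       [&& 0 < fval f i j,
           is_cell lam i j.+1 ==> (fval f i j <= fval f i j.+1) &
           is_cell lam i.+1 j ==> (fval f i j < fval f i.+1 j)]
     else fval f i j == 0].

Definition mult (d : nat) (lam : seq nat) : nat :=
  #|[set f : filling lam d | is_ssyt f]|.

Definition rem_box (mu : seq nat) (i : nat) : seq nat :=
  [seq x <- set_nth 0 mu i (nth 0 mu i).-1 | x != 0].

Definition removal_of (mu alpha : seq nat) : Prop :=
  is_partition alpha /\ exists2 i, i < size mu & alpha = rem_box mu i.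

(** The matrix is [c (D - J)] with [c <> 0], [D] the diagonal matrix of the
    [x_i = d m_mu / m_(alpha_i)] and [J] the all-ones matrix.  By the matrix
    determinant lemma [det (D - J) = (prod_i x_i) (1 - sum_i 1/x_i)], and all
    [x_i] are nonzero because every partition with at most [d] rows has a
    semistandard tableau with entries in [{1..d}] (fill row [i] with [i+1]).
    Hence [det B = 0] iff [sum_i m_(alpha_i) / (d m_mu) = 1]. *)
From mathcomp Require Import all_boot all_order all_algebra.
Set Implicit Arguments.
Unset Strict Implicit.
Unset Printing Implicit Defensive.

Import GRing.Theory Num.Theory.

Lemma sorted_geq_nth_le_head (s : seq nat) i : sorted geq s -> nth 0 s i <= head 0 s.
Proof.
case: s => [|x s] /= path_x; first by rewrite nth_nil.
have le_x := order_path_min (rev_trans leq_trans) path_x.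
case: (ltnP i (size s).+1) => [lt_i|ge_i]; last by rewrite nth_default.
have /predU1P [-> //|s_i] := @mem_nth _ 0 (x :: s) i lt_i.
exact: (allP le_x).
Qed.

Lemma fvalE lam d (f : filling lam d) i j (lt_i : i < size lam) (lt_j : j < head 0 lam) :
  fval f i j = f (Ordinal lt_i, Ordinal lt_j).
Proof. by rewrite /fval !insubT. Qed.

Lemma fval_out lam d (f : filling lam d) i j :
  ~~ ((i < size lam) && (j < head 0 lam)) -> fval f i j = 0.
Proof.
rewrite /fval; have [lt_i /= ge_j|ge_i _] := boolP (i < size lam).
  by rewrite (insubF 'I_(head 0 lam) (negbTE ge_j)); case: insub.
by rewrite (insubF 'I_(size lam) (negbTE ge_i)).
Qed.

Definition row_filling lam d : filling lam d :=
  [ffun ij : 'I_(size lam) * 'I_(head 0 lam) =>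
     if is_cell lam ij.1 ij.2 then inord ij.1.+1 else ord0].

Lemma fval_row_filling lam d i j : sorted geq lam -> size lam <= d ->
  fval (row_filling lam d) i j = if is_cell lam i j then i.+1 else 0.
Proof.
move=> sorted_lam size_lam.
have [lt_i|ge_i] := boolP (i < size lam); last first.
  by rewrite fval_out ?(negbTE ge_i) // /is_cell (negbTE ge_i).
have [lt_j|ge_j] := boolP (j < head 0 lam).
  rewrite fvalE ffunE /=; case: ifP => // _.
  by rewrite inordK // ltnS (leq_trans lt_i).
rewrite fval_out ?lt_i // /is_cell lt_i /=; case: ltnP => // lt_j.
by case/negP: ge_j; rewrite (leq_trans lt_j) ?sorted_geq_nth_le_head.
Qed.

Lemma mult_gt0 d lam : is_partition lam -> size lam <= d -> 0 < mult d lam.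
Proof.
move=> /andP [sorted_lam _] size_lam.
rewrite /mult card_gt0; apply/set0Pn; exists (row_filling lam d).
rewrite inE; apply/forallP => ij /=; rewrite !fval_row_filling //.
by case: (is_cell lam _ _); do 2?case: (is_cell lam _ _); rewrite /= ?ltnSn ?leqnn.
Qed.

Lemma size_rem_box mu i : i < size mu -> size (rem_box mu i) <= size mu.
Proof.
move=> lt_i; rewrite size_filter (leq_trans (count_size _ _)) //.
by rewrite size_set_nth (maxn_idPr lt_i).
Qed.

Lemma removal_mult_gt0 d mu alpha :
  size mu <= d -> removal_of mu alpha -> 0 < mult d alpha.
Proof.
move=> size_mu [part_alpha [i lt_i def_alpha]]; apply: mult_gt0 => //.
by rewrite def_alpha (leq_trans (size_rem_box lt_i)).
Qed.

Local Open Scope ring_scope.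

(* Factor the block matrix [[1, v], [u, 1]] as lower-times-upper and as
   upper-times-lower; the two Schur complements have equal determinants. *)
Lemma det_1_sub_mul_col_row (R : comPzRingType) k (u : 'cV[R]_k) (v : 'rV[R]_k) :
  \det (1%:M - u *m v) = 1 - (v *m u) 0 0.
Proof.
have LU : block_mx (1%:M : 'M[R]_1) v u 1%:M
    = block_mx 1%:M 0 u 1%:M *m block_mx 1%:M v 0 (1%:M - u *m v).
  by rewrite mulmx_block !(mul1mx, mulmx1, mulmx0, mul0mx, addr0, add0r) addrC subrK.
have UL : block_mx (1%:M : 'M[R]_1) v u 1%:M
    = block_mx 1%:M v 0 1%:M *m block_mx (1%:M - v *m u) 0 u 1%:M.
  by rewrite mulmx_block !(mul1mx, mulmx1, mulmx0, mul0mx, addr0, add0r) subrK.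
have := congr1 determinant LU; rewrite UL !det_mulmx !det_lblock !det_ublock.
by rewrite !det1 !mul1r mulr1 det_mx11 !mxE eqxx mulr1n => <-.
Qed.

Lemma det_diag_sub_const1 (F : fieldType) k (x : 'I_k -> F) : (forall i, x i != 0) ->
  \det (diag_mx (\row_i x i) - const_mx 1) = (\prod_i x i) * (1 - \sum_i (x i)^-1).
Proof.
move=> x_neq0; set u : 'cV[F]_k := \col_i (x i)^-1.
have -> : diag_mx (\row_i x i) - const_mx 1 = diag_mx (\row_i x i) *m (1%:M - u *m const_mx 1).
  have diag_u : diag_mx (\row_i x i) *m u = const_mx 1.
    by apply/matrixP => i j; rewrite mul_diag_mx !mxE divff.
  rewrite mulmxBr mulmx1 mulmxA diag_u; congr (_ - _).
  by apply/matrixP => i j; rewrite !mxE big_ord1 !mxE mulr1.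
rewrite det_mulmx det_diag det_1_sub_mul_col_row; congr (_ * (1 - _)).
  by apply: eq_bigr => i _; rewrite mxE.
by rewrite !mxE; apply: eq_bigr => i _; rewrite !mxE mul1r.
Qed.

Lemma det_scale_diag_sub_const1_eq0 (F : fieldType) k (c : F) (x : 'I_k -> F) :
  c != 0 -> (forall i, x i != 0) ->
  (\det (c *: (diag_mx (\row_i x i) - const_mx 1)) == 0) = (\sum_i (x i)^-1 == 1).
Proof.
move=> c_neq0 x_neq0; rewrite detZ det_diag_sub_const1 // !mulf_eq0 expf_eq0.
have prod_neq0 : \prod_i x i != 0 by apply/prodf_neq0 => i _.
by rewrite (negbTE c_neq0) andbF (negbTE prod_neq0) subr_eq0 eq_sym.
Qed.
Local Close Scope ring_scope.

Theorem corollary30 (d p : nat) (mu : seq nat) (alphas : seq (seq nat)) :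
  2 <= d ->
  is_partition mu -> sumn mu = p -> size mu <= d ->
  uniq alphas ->
  (forall a, a \in alphas <-> removal_of mu a) ->
  let k := size alphas in
  let B : 'M[rat]_k :=
    (\matrix_(i < k, j < k)
      (((mult d mu)%:R / (d%:R * (d%:R ^+ 2 - 1))) *
       (d%:R * ((mult d mu)%:R / (mult d (nth [::] alphas i))%:R) * (i == j)%:R - 1)))%R
  in
  (\det B = 0)%R <-> d * mult d mu = \sum_(a <- alphas) mult d a.
Proof.
move=> le2d part_mu _ size_mu _ alphasP k B.
set m := mult d mu in B *.
pose m_alpha (i : 'I_k) := mult d (nth [::] alphas i).
have natr_neq0 n : 0 < n -> (n%:R : rat) != 0%R by rewrite pnatr_eq0 -lt0n.
have m_neq0 : (m%:R : rat) != 0%R by rewrite natr_neq0 ?mult_gt0.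
have d_neq0 : (d%:R : rat) != 0%R by rewrite natr_neq0 // (ltn_trans _ le2d).
have m_alpha_neq0 (i : 'I_k) : ((m_alpha i)%:R : rat) != 0%R.
  by rewrite natr_neq0 // (removal_mult_gt0 size_mu) //; apply/alphasP/mem_nth.
pose c : rat := (m%:R / (d%:R * (d%:R ^+ 2 - 1)))%R.
pose x (i : 'I_k) : rat := (d%:R * (m%:R / (m_alpha i)%:R))%R.
have -> : B = (c *: (diag_mx (\row_i x i) - const_mx 1))%R.
  apply/matrixP => i j; rewrite !mxE.
  by case: eqP => [->|_]; rewrite ?mulr1 ?mulr0 ?mulr0n.
have c_neq0 : c != 0%R.
  have d2_neq1 : (d%:R ^+ 2 != 1 :> rat)%R.
    by rewrite -natrX pnatr_eq1 -(exp1n 2) eqn_exp2r // gtn_eqF.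
  by rewrite mulf_neq0 // invr_neq0 // mulf_neq0 // subr_eq0.
have x_neq0 (i : 'I_k) : x i != 0%R by rewrite mulf_neq0 // mulf_neq0 // invr_neq0.
have sum_inv_x : (\sum_i (x i)^-1 = (\sum_(a <- alphas) mult d a)%:R / (d * m)%:R)%R.
  rewrite (big_nth [::]) big_mkord natr_sum mulr_suml; apply: eq_bigr => i _.
  by rewrite invfM invf_div natrM invfM mulrCA.
apply: (iff_trans (rwP eqP)); rewrite det_scale_diag_sub_const1_eq0 // sum_inv_x.
have dm_neq0 : ((d * m)%:R : rat) != 0%R by rewrite natrM mulf_neq0.
rewrite -(inj_eq (mulIf dm_neq0)) divfK // mul1r eqr_nat eq_sym.
by split => /eqP.
Qed.
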